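(* Let $n\ge2$ and let $(V,\langle-,\ldots,-\rangle_n)$ be an infinite-dimensional non-degenerate alternating (resp. symmetric) $n$-linear space over a field $K$, and let $U$ be a finite-dimensional subspace of $V$. Then for any linearly independent $t_1,\ldots,t_m\in\lozenge^{n-1}V$ and any $k_1,\ldots,k_m\in K$ there is $w\in V$, linearly independent from $U$, such that $\langle t_i,w\rangle_2=k_i$ for all $i\le m$.
   Context: $\lozenge^{n-1}V$ is $\bigwedge^{n-1}V$ (alternating case) or $\bigvee^{n-1}V$ (symmetric case); $\langle-,-\rangle_2$ is the induced bilinear form on $(\lozenge^{n-1}V)\times V$ with $\langle\overline{v_1\otimes\cdots\otimes v_{n-1}},v\rangle_2=\langle v_1,\ldots,v_{n-1},v\rangle_n$ extended linearly. Non-degenerate: for every nonzero $t\in\lozenge^{n-1}V$ there is $w\in V$ with $\langle t,w\rangle_2\ne0$. *)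

From HB Require Import structures.
From mathcomp Require Import all_boot all_order all_fingroup all_algebra.
Set Implicit Arguments. Unset Strict Implicit. Unset Printing Implicit Defensive.
Import Order.TTheory GRing.Theory.
Local Open Scope ring_scope.

Section Defs.
Variables (K : fieldType) (V : lmodType K).

Definition upd (k : nat) (x : {ffun 'I_k -> V}) (i : 'I_k) (u : V)
  : {ffun 'I_k -> V} := [ffun j => if j == i then u else x j].

Definition multilinear_form (k : nat) (form : {ffun 'I_k -> V} -> K) : Prop :=
  forall (x : {ffun 'I_k -> V}) (i : 'I_k) (a : K) (u v : V),
    form (upd x i (a *: u + v)) = a * form (upd x i u) + form (upd x i v).

Definition alternating_form (k : nat) (form : {ffun 'I_k -> V} -> K) : Prop :=
  forall (x : {ffun 'I_k -> V}) (i j : 'I_k), i != j -> x i = x j -> form x = 0.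

Definition symmetric_form (k : nat) (form : {ffun 'I_k -> V} -> K) : Prop :=
  forall (x : {ffun 'I_k -> V}) (s : 'S_k), form [ffun j => x (s j)] = form x.

Definition nlinear_form (alt : bool) (k : nat) (form : {ffun 'I_k -> V} -> K) :=
  multilinear_form form /\ (if alt then alternating_form form else symmetric_form form).

(* Formal (finite) linear combinations of pure tensors v_1 (x) ... (x) v_k,
   i.e. elements of the free K-vector space on V^k, given by representatives. *)
Definition fsum (k : nat) := seq (K * {ffun 'I_k -> V}).

Definition fcoef (k : nat) (t : fsum k) (x : {ffun 'I_k -> V}) : K :=
  \sum_(p <- t) (if p.2 == x then p.1 else 0).

Definition fscale (k : nat) (c : K) (t : fsum k) : fsum k :=
  [seq (c * p.1, p.2) | p <- t].

Definition fcomb (k : nat) (gs : seq (K * fsum k)) : fsum k :=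
  flatten [seq fscale g.1 g.2 | g <- gs].

(* Generators of the relation subspace whose quotient is the exterior power
   (alt = true) resp. the symmetric_form power (alt = false) of V. *)
Definition is_relgen (alt : bool) (k : nat) (g : fsum k) : Prop :=
  (exists (x : {ffun 'I_k -> V}) (i : 'I_k) (a : K) (u v : V),
      g = [:: (1, upd x i (a *: u + v)); (- a, upd x i u); (-1, upd x i v)])
  \/ (alt /\ exists (x : {ffun 'I_k -> V}) (i j : 'I_k),
        i != j /\ x i = x j /\ g = [:: (1, x)])
  \/ (~~ alt /\ exists (x : {ffun 'I_k -> V}) (s : 'S_k),
        g = [:: (1, x); (-1, [ffun j => x (s j)])]).

(* t represents 0 in lozenge^k V: it lies in the span of the relations. *)
Definition lz_zero (alt : bool) (k : nat) (t : fsum k) : Prop :=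
  exists gs : seq (K * fsum k),
    (forall g, g \in [seq h.2 | h <- gs] -> is_relgen alt g) /\
    forall x, fcoef t x = fcoef (fcomb gs) x.

Definition lz_lin_indep (alt : bool) (k m : nat) (t : 'I_m -> fsum k) : Prop :=
  forall a : 'I_m -> K,
    lz_zero alt (fcomb [seq (a i, t i) | i <- enum 'I_m]) -> forall i, a i = 0.

Definition extend (n : nat) (x : {ffun 'I_n.-1 -> V}) (w : V) : {ffun 'I_n -> V} :=
  [ffun j : 'I_n => if (insub (val j) : option 'I_n.-1) is Some j' then x j' else w].

Definition pair2 (n : nat) (form : {ffun 'I_n -> V} -> K) (t : fsum n.-1) (w : V) : K :=
  \sum_(p <- t) p.1 * form (extend p.2 w).

Definition nondeg_nform (alt : bool) (n : nat) (form : {ffun 'I_n -> V} -> K) : Prop :=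
  forall t : fsum n.-1, ~ lz_zero alt t -> exists w : V, pair2 form t w != 0.

Definition in_span (s : seq V) (v : V) : Prop :=
  exists c : 'I_(size s) -> K, v = \sum_(i < size s) c i *: s`_i.

Definition infinite_dim : Prop := forall s : seq V, exists v : V, ~ in_span s v.

End Defs.

(* The maps w |-> <t_i, w>_2 are linear functionals on V (multilinearity in the
   last slot), and they are linearly independent: a relation
   sum_i a_i <t_i, -> = 0 says that sum_i a_i t_i pairs trivially with V, so by
   non-degeneracy it vanishes in the (n-1)-th power and all a_i are 0.
   Independent functionals admit a dual family w_1, ..., w_m with
   <t_i, w_j>_2 = delta_ij.  Since V is infinite-dimensional there is v outside
   the span of U and the w_j; then w = v + sum_j (k_j - <t_j, v>_2) w_j takes
   the prescribed values, and w is not in U, as otherwise v would lie in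
   U + span(w_j). *)

From HB Require Import structures.
From mathcomp Require Import all_boot all_order all_fingroup all_algebra.
From Stdlib Require Import Classical.
Import GRing.Theory.
Local Open Scope ring_scope.
Set Implicit Arguments. Unset Strict Implicit.

Section Span.
Variables (K : fieldType) (V : lmodType K).
Implicit Types (s : seq V) (u v : V).

Lemma in_span0 s : in_span s 0.
Proof. by exists (fun=> 0); rewrite big1 // => i _; rewrite scale0r. Qed.

Lemma in_spanD s u v : in_span s u -> in_span s v -> in_span s (u + v).
Proof.
move=> [c ->] [d ->]; exists (fun i => c i + d i).
by rewrite -big_split; apply: eq_bigr => i _; rewrite scalerDl.
Qed.

Lemma in_spanZ s a v : in_span s v -> in_span s (a *: v).
Proof.
move=> [c ->]; exists (fun i => a * c i).
by rewrite scaler_sumr; apply: eq_bigr => i _; rewrite scalerA.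
Qed.

Lemma in_spanB s u v : in_span s u -> in_span s v -> in_span s (u - v).
Proof. by move=> su sv; rewrite -scaleN1r; apply/in_spanD/in_spanZ. Qed.

Lemma in_span_sum s (I : Type) (r : seq I) (P : pred I) (F : I -> V) :
  (forall i, P i -> in_span s (F i)) -> in_span s (\sum_(i <- r | P i) F i).
Proof. by move=> sF; apply: big_ind => //; [exact: in_span0 | exact: in_spanD]. Qed.

Lemma in_span_mem s v : v \in s -> in_span s v.
Proof.
move=> vs; have idx_lt : (index v s < size s)%N by rewrite index_mem.
pose i0 := Ordinal idx_lt.
exists (fun i => (i == i0)%:R); rewrite (bigD1 i0) //= big1 => [|i /negbTE->].
  by rewrite eqxx scale1r addr0 nth_index.
by rewrite scale0r.
Qed.

Lemma in_span_subset s (s' : seq V) v : {subset s <= s'} -> in_span s v -> in_span s' v.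
Proof.
move=> ss' [c ->]; apply: in_span_sum => i _.
by apply/in_spanZ/in_span_mem/ss'/mem_nth.
Qed.

End Span.

Section DualBasis.
Variables (K : fieldType) (V : lmodType K).

Definition free_forms (M : nat) (f : 'I_M -> {scalar V}) : Prop :=
  forall a : 'I_M -> K, (forall w, \sum_i a i * f i w = 0) -> forall i, a i = 0.

Lemma free_forms_lift0 M (f : 'I_M.+1 -> {scalar V}) :
  free_forms f -> free_forms (fun j => f (lift ord0 j)).
Proof.
move=> f_free a a_f j; pose b i := if unlift ord0 i is Some j' then a j' else 0.
have /(_ (lift ord0 j)) : forall i, b i = 0.
  apply: f_free => w; rewrite big_ord_recl /b unlift_none mul0r add0r -[RHS](a_f w).
  by apply: eq_bigr => i _; rewrite liftK.
by rewrite /b liftK.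
Qed.

Lemma dual_basis_sum M (f : 'I_M -> {scalar V}) (ws : 'I_M -> V) (c : 'I_M -> K) i :
  (forall i j, f i (ws j) = (i == j)%:R) -> f i (\sum_j c j *: ws j) = c i.
Proof.
move=> dual; rewrite linear_sum (bigD1 i) //= big1 => [|j /negbTE ji].
  by rewrite scalarZ dual eqxx mulr1 addr0.
by rewrite scalarZ dual eq_sym ji mulr0.
Qed.

Lemma exists_dual_basis M (f : 'I_M -> {scalar V}) :
  free_forms f -> exists ws : 'I_M -> V, forall i j, f i (ws j) = (i == j)%:R.
Proof.
elim: M f => [|M IH] f f_free; first by exists (fun=> 0); case.
pose g j := f (lift ord0 j).
have [ws dual_ws] := IH g (free_forms_lift0 f_free).
(* P projects onto the common kernel of the g_j; by freeness f ord0 cannot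
   vanish there, which yields the missing dual vector w0. *)
pose P v := v - \sum_j g j v *: ws j.
have gP i v : g i (P v) = 0 by rewrite linearB /= dual_basis_sum // subrr.
have [v fPv_neq0] : exists v, f ord0 (P v) != 0.
  apply: NNPP => /not_ex_all_not fP0.
  pose b i := if unlift ord0 i is Some j then - f ord0 (ws j) else 1.
  suff /(_ ord0) : forall i, b i = 0 by rewrite /b unlift_none; apply/eqP/oner_neq0.
  apply: f_free => w; transitivity (f ord0 (P w)); last exact/eqP/negbNE/negP/fP0.
  rewrite big_ord_recl /b unlift_none mul1r linearB linear_sum /= -sumrN.
  congr (_ + _); apply: eq_bigr => j _.
  by rewrite liftK scalarZ mulNr mulrC.
pose w0 := (f ord0 (P v))^-1 *: P v.
have f_w0 i : f i w0 = (i == ord0)%:R.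
  case: (unliftP ord0 i) => [i'|] ->; rewrite scalarZ /=.
    by rewrite [f (lift _ _) _]gP mulr0.
  by rewrite mulVf // eqxx.
exists (fun j => if unlift ord0 j is Some j' then ws j' - f ord0 (ws j') *: w0 else w0).
move=> i j; case: (unliftP ord0 j) => [j'|] ->; last by rewrite f_w0.
rewrite linearB scalarZ /= f_w0.
case: (unliftP ord0 i) => [i'|] ->.
  by rewrite [f (lift _ _) _]dual_ws [lift _ _ == _]eq_sym (negbTE (neq_lift _ _))
             mulr0 subr0 (inj_eq lift_inj).
by rewrite eqxx mulr1 subrr.
Qed.

End DualBasis.

Section Pairing.
Variables (K : fieldType) (V : lmodType K) (n : nat) (form : {ffun 'I_n.+1 -> V} -> K).

Lemma extend_upd_max (x : {ffun 'I_n -> V}) (w : V) :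
  extend (n := n.+1) x w = upd (extend (n := n.+1) x 0) ord_max w.
Proof.
apply/ffunP => j; rewrite !ffunE; case: insubP => [j' j_lt _|j_ge].
  by rewrite ifN // -val_eqE /= neq_ltn j_lt.
by rewrite ifT //; apply/eqP/val_inj; apply/eqP; rewrite eqn_leq -ltnS ltn_ord leqNgt.
Qed.

Lemma pair2_fcomb (gs : seq (K * fsum V n)) w :
  pair2 form (fcomb gs) w = \sum_(g <- gs) g.1 * pair2 form g.2 w.
Proof.
rewrite /pair2 /fcomb big_flatten big_map /=; apply: eq_bigr => g _.
by rewrite big_map big_distrr; apply: eq_bigr => p _; rewrite /= mulrA.
Qed.

Hypothesis form_multilinear : multilinear_form form.

Lemma form_extendP x a u v :
  form (extend x (a *: u + v)) = a * form (extend x u) + form (extend x v).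
Proof.
rewrite [extend x (_ + _)]extend_upd_max [extend x u]extend_upd_max.
by rewrite [extend x v]extend_upd_max form_multilinear.
Qed.

Lemma pair2_is_scalar t : scalar (pair2 form t).
Proof.
move=> a u v; rewrite /pair2 big_distrr -big_split /=; apply: eq_bigr => p _.
by rewrite form_extendP mulrDr mulrCA.
Qed.

Definition pair2_scalar t : {scalar V} :=
  HB.pack (pair2 form t) (GRing.isLinear.Build _ _ _ _ _ (pair2_is_scalar t)).

Lemma free_pair2 alt m (t : 'I_m -> fsum V n) :
  nondeg_nform alt form -> lz_lin_indep alt t ->
  free_forms (fun i => pair2_scalar (t i)).
Proof.
move=> nondeg t_free a a_pair2; apply: t_free; apply: NNPP => /nondeg [w].
by rewrite pair2_fcomb big_map big_enum /= a_pair2 eqxx.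
Qed.

End Pairing.

Theorem lemma2p9 (K : fieldType) (V : lmodType K) (n : nat) (alt : bool)
    (form : {ffun 'I_n -> V} -> K) :
  (2 <= n)%N ->
  nlinear_form alt form ->
  nondeg_nform alt form ->
  infinite_dim V ->
  forall (us : seq V) (m : nat) (t : 'I_m -> fsum V n.-1) (k : 'I_m -> K),
    lz_lin_indep alt t ->
    exists w : V, ~ in_span us w /\ forall i : 'I_m, pair2 form (t i) w = k i.
Proof.
case: n form => [|n] form // _ [multilin _] nondeg inf_dim us m t k t_free.
pose f i := pair2_scalar multilin (t i).
have [ws dual_ws] := exists_dual_basis (free_pair2 nondeg t_free).
have [v v_out] := inf_dim (us ++ codom ws).
set corr := \sum_j (k j - f j v) *: ws j.
exists (v + corr); split=> [w_in | i]; last first.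
  by rewrite -[pair2 _ _]/(f i : V -> K) linearD dual_basis_sum // addrC subrK.
apply: v_out; rewrite -(addrK corr v); apply: in_spanB.
  by apply: in_span_subset w_in => x x_us; rewrite mem_cat x_us.
by apply: in_span_sum => j _; apply/in_spanZ/in_span_mem; rewrite mem_cat codom_f orbT.
Qed.
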